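(* Let $G$ be an execution graph satisfying $\mathit{BE}(G)$, $T$ a thread, $q$ an iteration index with $\mathit{WI}_G^T(q)$, and $m\le\mathit{len}_G^T(q)$. Write $a=\mathit{start}_G^T(q)+m$ and $b=\mathit{start}_G^T(q+1)+m$. Then: (1) $e_G^T(a)=e_G^T(b)$; (2) $v_G^T(a)=v_G^T(b)$; (3) $k_G^T(a)=k_G^T(b)$; (4) for every register $r$ with $\sigma_G^T(a)(r)\neq\sigma_G^T(b)(r)$ there is $u\in[\mathit{start}_G^T(q):\mathit{end}_G^T(q)]$ with $r\in\mathit{vis}_G^T(u,b)$.
   Context: Programs. There are finite sets $\mathit{Register}$, $\mathit{Value}$, $\mathit{Location}$; $\mathit{State}=\mathit{Register}\to\mathit{Value}$; an update is a partial map $\mathit{Register}\rightharpoonup\mathit{Value}$, and $(\sigma\ll\mu)(r)=\mu(r)$ if $r\in\mathrm{Dom}(\mu)$, else $\sigma(r)$. Events are reads $R^m(x)$, writes $W^m(x,v)$, fences $F^m$, error $E$. A program consists of finitely many threads $T$, each with a finite statement sequence $P_T(0),\dots,P_T(|P_T|-1)$. A statement is $\mathtt{step}(\epsilon,\delta)$ with $\epsilon:\mathit{State}\to\mathit{Event}$, $\delta:\mathit{State}\times(\mathit{Value}\cup\{\bot\})\to\mathit{Update}$, or $\mathtt{await}(n,\kappa)$ with $n\in\mathbb N$, $\kappa:\mathit{State}\to\{0,1\}$. Syntactic restriction: if $P_T(k)=\mathtt{await}(n,\cdot)$ then $n\le k$ and no $P_T(k')$ with $k'\in[k-n:k)$ is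 an await. ($[a:b)=\{a,\dots,b-1\}$, $[a:b]=\{a,\dots,b\}$.) An execution graph $G$ has a set $G.\mathrm E$ of triples $\langle T,t,e\rangle$ and a partial reads-from map $G.\mathrm{rf}$ from reads to writes. Thread-local semantics: $k_G^T(0)=0$, $\sigma_G^T(0)$ fixed; if $k_G^T(t)\ge|P_T|$ or no triple $\langle T,t,\cdot\rangle$ is in $G.\mathrm E$, execution stops ($N_G^T=t$). Otherwise with $S=P_T(k_G^T(t))$: $e_G^T(t)=\epsilon(\sigma_G^T(t))$ for $S=\mathtt{step}(\epsilon,\cdot)$, $F^{\mathrm{rlx}}$ for an await; $v_G^T(t)$ is the value of the write that $G.\mathrm{rf}$ assigns to $\langle T,t,e_G^T(t)\rangle$ if this is a read with defined rf, else $\bot$. For a step: $k_G^T(t+1)=k_G^T(t)+1$; if $e_G^T(t)$ is a read with $v_G^T(t)=\bot$ then $N_G^T=t+1$, $\sigma_G^T(t+1)=\sigma_G^T(t)$, else $\sigma_G^T(t+1)=\sigma_G^T(t)\ll\delta(\sigma_G^T(t),v_G^T(t))$. For $\mathtt{await}(n,\kappa)$: $\sigma_G^T(t+1)=\sigma_G^T(t)$ and $k_G^T(t+1)=k_G^T(t)+1$ if $\kappa(\sigma_G^T(t))=0$, else $k_G^T(t)-n$. Awaits: $\mathit{end}_G^T(0)<\mathit{end}_G^T(1)<\cdots$ enumerate the steps $t$ at which $P_T(k_G^T(t))$ is an await; $\mathit{len}_G^T(q)=n$ where $P_T(k_G^T(\mathit{end}_G^T(q)))=\mathtt{await}(n,\kappa)$;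 $\mathit{start}_G^T(q)=\mathit{end}_G^T(q)-\mathit{len}_G^T(q)$; $\mathit{fail}_G^T(q)$ iff $\kappa(\sigma_G^T(\mathit{end}_G^T(q)))=1$. $\mathit{WI}_G^T(q)$ holds iff $\mathit{fail}_G^T(q)$ and for every $m\le\mathit{len}_G^T(q)$ such that $e_G^T(\mathit{start}_G^T(q)+m)$ is a read, the events of steps $\mathit{start}_G^T(q)+m$ and $\mathit{start}_G^T(q+1)+m$ of $T$ are mapped by $G.\mathrm{rf}$ to the same write. Bounded effect. $\delta_G^T(t)=\delta(\sigma_G^T(t),v_G^T(t))$ if $P_T(k_G^T(t))=\mathtt{step}(\cdot,\delta)$ and not ($e_G^T(t)$ is a read and $v_G^T(t)=\bot$); otherwise the empty update. $\mathit{vis}_G^T(t,u)=\mathrm{Dom}(\delta_G^T(t))\setminus\bigcup_{t<u'<u}\mathrm{Dom}(\delta_G^T(u'))$. $F(\mathtt{step}(\epsilon,\delta))=\{\epsilon,\delta\}$, $F(\mathtt{await}(n,\kappa))=\{\kappa\}$. A function $f$ depends on $R\subseteq\mathit{Register}$ iff there are states $\sigma,\sigma'$ with $\sigma(r)=\sigma'(r)$ for all $r\notin R$ and $f(\sigma)\neq f(\sigma')$ (for $f=\delta$: $\delta(\sigma,v)\neq\delta(\sigma',v)$ for some $v$). Step $t$ of $T$ register-reads-from to step $u$ ($t\to_{\mathrm{rrf}}u$) iff $u\ge t$ and some $f\in F(P_T(k_G^T(u)))$ depends on $\mathit{vis}_G^T(t,u)$. $\mathit{BE}(G)$ holds iff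 for all threads $T$, all $q$ with $\mathit{fail}_G^T(q)$ and all $t\in[\mathit{start}_G^T(q):\mathit{end}_G^T(q))$: $e_G^T(t)$ is not a write, and $t\to_{\mathrm{rrf}}u$ implies $u\in[\mathit{start}_G^T(q):\mathit{end}_G^T(q))$. *)

From mathcomp Require Import all_boot.
From Stdlib Require Import ClassicalEpsilon.

Set Implicit Arguments.
Unset Strict Implicit.
Unset Printing Implicit Defensive.

Section Syntax.
Variables (Register Value Location : finType) (Mode : Type).

Definition State := Register -> Value.
(** An update is a partial map Register -> Value; Dom(mu) = {r | mu r <> None}. *)
Definition Update := Register -> option Value.
Definition empty_update : Update := fun _ => None.

Definition upd (s : State) (mu : Update) : State :=
  fun r => match mu r with Some v => v | None => s r end.

Inductive Event :=
  | ERead of Mode & Location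
  | EWrite of Mode & Location & Value
  | EFence of Mode
  | EErr.

Definition is_read (e : Event) : bool := if e is ERead _ _ then true else false.
Definition is_write (e : Event) : bool := if e is EWrite _ _ _ then true else false.

(** Statements: step(eps, delta), with bottom encoded as None; await(n, kappa). *)
Inductive Stmt :=
  | Step of (State -> Event) & (State -> option Value -> Update)
  | Await of nat & (State -> bool).

Definition is_await (s : Stmt) : bool := if s is Await _ _ then true else false.

Definition depends {B : Type} (f : State -> B) (R : Register -> Prop) : Prop :=
  exists s s' : State, (forall r, ~ R r -> s r = s' r) /\ f s <> f s'.

Definition depends2 (d : State -> option Value -> Update) (R : Register -> Prop) : Prop :=
  exists (s s' : State) (v : option Value),
    (forall r, ~ R r -> s r = s' r) /\ d s v <> d s' v.

Definition stmt_depends (S : Stmt) (R : Register -> Prop) : Prop :=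
  match S with
  | Step eps delta => depends eps R \/ depends2 delta R
  | Await _ kappa => depends kappa R
  end.

End Syntax.

Arguments ERead {Value Location Mode}.
Arguments EWrite {Value Location Mode}.
Arguments EFence {Value Location Mode}.
Arguments EErr {Value Location Mode}.
Arguments Step {Register Value Location Mode}.
Arguments Await {Register Value Location Mode}.

Section Programs.
Variables (Register Value Location : finType) (Mode : Type) (Thread : finType).

Definition Program := Thread -> seq (Stmt Register Value Location Mode).

Definition stmt_at (P : Program) (T : Thread) (k : nat)
  : option (Stmt Register Value Location Mode) :=
  nth None (map Some (P T)) k.

Definition wf_program (P : Program) : Prop :=
  forall T k n kappa, stmt_at P T k = Some (Await n kappa) ->
    n <= k /\
    forall k', k - n <= k' < k ->
      forall S, stmt_at P T k' = Some S -> ~~ is_await S.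

(** Execution graphs: a set of triples <T,t,e> and a partial rf map. *)
Record Graph := {
  GE  : Thread -> nat -> Event Value Location Mode -> Prop;
  Grf : Thread * nat * Event Value Location Mode ->
        option (Thread * nat * Event Value Location Mode) }.

Definition graph_wf (G : Graph) : Prop :=
  forall T t e T' t' e', Grf G (T, t, e) = Some (T', t', e') ->
    is_read e /\ is_write e'.

End Programs.

Section Semantics.
Variables (Register Value Location : finType) (Mode : Type) (rlx : Mode)
          (Thread : finType).
Variables (P : Program Register Value Location Mode Thread)
          (init : Thread -> State Register Value)
          (G : Graph Value Location Mode Thread)
          (T : Thread).

Local Notation State := (State Register Value).
Local Notation Event := (Event Value Location Mode).
Local Notation Stmt := (Stmt Register Value Location Mode).

Definition decP (A : Prop) : bool :=
  if excluded_middle_informative A then true else false.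

Definition ev_of (S : Stmt) (s : State) : Event :=
  match S with Step eps _ => eps s | Await _ _ => EFence rlx end.

(** value of the write that rf assigns to <T,t,e> (None = bottom) *)
Definition rf_val (t : nat) (e : Event) : option Value :=
  if is_read e then
    match Grf G (T, t, e) with
    | Some (_, _, EWrite _ _ v) => Some v
    | _ => None
    end
  else None.

(** A configuration: (k, sigma, alive); alive = false after a read with
    value bottom (execution stops at the next step). *)
Definition Config := (nat * State * bool)%type.

Definition exec (t : nat) (c : Config) : bool :=
  let: (k, s, alive) := c in
  [&& alive, k < size (P T) & decP (exists e, GE G T t e)].

Definition next (t : nat) (c : Config) : Config :=
  let: (k, s, alive) := c in
  match stmt_at P T k with
  | Some (Step eps delta) =>
      let e := eps s in
      let v := rf_val t e in
      if is_read e && (v == None) then (k.+1, s, false)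
      else (k.+1, upd s (delta s v), true)
  | Some (Await n kappa) =>
      if kappa s then (k - n, s, true) else (k.+1, s, true)
  | None => c
  end.

Fixpoint cfg (t : nat) : option Config :=
  match t with
  | 0 => Some (0, init T, true)
  | t'.+1 => match cfg t' with
             | Some c => if exec t' c then Some (next t' c) else None
             | None => None
             end
  end.

(** step t of T is executed, i.e. t < N_G^T *)
Definition executed (t : nat) : bool :=
  if cfg t is Some c then exec t c else false.

(** k_G^T(t) and sigma_G^T(t) (defined for t <= N; defaults beyond) *)
Definition kk (t : nat) : nat := if cfg t is Some (k, _, _) then k else 0.
Definition sigma (t : nat) : State := if cfg t is Some (_, s, _) then s else init T.

Definition ev (t : nat) : Event :=
  if stmt_at P T (kk t) is Some St then ev_of St (sigma t) else EErr.

Definition vv (t : nat) : option Value := rf_val t (ev t).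

Definition await_step (t : nat) : bool :=
  executed t && (if stmt_at P T (kk t) is Some St then is_await St else false).

Definition is_end (q t : nat) : Prop :=
  await_step t /\ count await_step (iota 0 t) = q.

Definition has_end (q : nat) : Prop := exists t, is_end q t.

Definition end_ (q : nat) : nat :=
  match excluded_middle_informative (has_end q) with
  | left H => proj1_sig (constructive_indefinite_description _ H)
  | right _ => 0
  end.

Definition len (q : nat) : nat :=
  if stmt_at P T (kk (end_ q)) is Some (Await n _) then n else 0.

Definition start (q : nat) : nat := end_ q - len q.

Definition fail (q : nat) : Prop :=
  has_end q /\
  (if stmt_at P T (kk (end_ q)) is Some (Await _ kappa)
   then kappa (sigma (end_ q)) else false).

Definition WI (q : nat) : Prop :=
  fail q /\ has_end q.+1 /\
  forall m, m <= len q -> is_read (ev (start q + m)) ->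
    exists w, Grf G (T, start q + m, ev (start q + m)) = Some w /\
              Grf G (T, start q.+1 + m, ev (start q.+1 + m)) = Some w.

Definition delta_at (t : nat) : Update Register Value :=
  if executed t then
    match stmt_at P T (kk t) with
    | Some (Step _ delta) =>
        if is_read (ev t) && (vv t == None) then @empty_update Register Value
        else delta (sigma t) (vv t)
    | _ => @empty_update Register Value
    end
  else @empty_update Register Value.

Definition vis (t u : nat) (r : Register) : Prop :=
  delta_at t r <> None /\ forall u', t < u' < u -> delta_at u' r = None.

Definition rrf (t u : nat) : Prop :=
  t <= u /\ executed u /\
  (if stmt_at P T (kk u) is Some St then stmt_depends St (vis t u) else False).

End Semantics.

Definition BE (Register Value Location : finType) (Mode : Type) (rlx : Mode)
  (Thread : finType) (P : Program Register Value Location Mode Thread)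
  (init : Thread -> State Register Value)
  (G : Graph Value Location Mode Thread) : Prop :=
  forall T q, fail P init G T q ->
    forall t, start P init G T q <= t < end_ P init G T q ->
      ~~ is_write (ev rlx P init G T t) /\
      forall u, rrf rlx P init G T t u ->
        start P init G T q <= u < end_ P init G T q.

From Pilot Require Import Defs.
From mathcomp Require Import all_boot zify.
From Stdlib Require Import Lia Classical ClassicalEpsilon FunctionalExtensionality.

Set Implicit Arguments.
Unset Strict Implicit.
Unset Printing Implicit Defensive.

(* Let te = end(q) and n = len(q).  The await at te fails, so control jumps back to
   the first statement of its window; as the window contains no await, the steps
   te+1, ..., te+n replay the same n statements and te+n+1 is the next await, whence
   start(q+1) = te+1.  Along the replay, the states at start(q)+j and te+1+j differ
   only in registers whose last write lies in [start(q), te).  BE forbids the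
   replayed statements to depend on such writes, so both steps produce the same
   event and update, WI gives them the same read value, and the invariant passes
   to j+1. *)

Lemma independent_agree (Register Value : finType) (B : Type) (I : eqType)
    (f : State Register Value -> B) (V : I -> Register -> Prop) (L : seq I)
    (sa sb : State Register Value) :
  (forall u, u \in L -> ~ depends f (V u)) ->
  (forall r, sa r <> sb r -> exists2 u, u \in L & V u r) ->
  f sa = f sb.
Proof.
elim: L sa => [|u L IH] sa indep cover.
  congr f; apply: functional_extensionality => r.
  by apply: NNPP => /cover [].
(* Hybrid argument: pass from sa to sb by switching one block [V u] at a time. *)
pose sc r := if excluded_middle_informative (V u r) then sb r else sa r.
have -> : f sa = f sc.
  apply: NNPP => neq; apply: (indep u (mem_head u L)).
  by exists sa, sc; split=> // r; rewrite /sc; case: excluded_middle_informative.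
apply: IH => [w wL | r]; first by apply: indep; rewrite inE wL orbT.
rewrite /sc; case: excluded_middle_informative => // nVu /cover [w].
by rewrite inE => /predU1P [-> /nVu | wL Vw]; last exists w.
Qed.

Section ThreadRun.
Variables (Register Value Location : finType) (Mode : Type) (rlx : Mode)
  (Thread : finType) (P : Program Register Value Location Mode Thread)
  (init : Thread -> State Register Value)
  (G : Graph Value Location Mode Thread) (T : Thread).

Local Notation cfg := (cfg P init G T).
Local Notation executed := (executed P init G T).
Local Notation kk := (kk P init G T).
Local Notation sigma := (sigma P init G T).
Local Notation ev := (ev rlx P init G T).
Local Notation vv := (vv rlx P init G T).
Local Notation delta_at := (delta_at rlx P init G T).
Local Notation vis := (vis rlx P init G T).
Local Notation await_step := (await_step P init G T).
Local Notation is_end := (is_end P init G T).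
Local Notation end_ := (end_ P init G T).

Lemma stmt_at_defined k : k < size (P T) -> exists S, stmt_at P T k = Some S.
Proof.
move=> lt_k; exists (nth (Await 0 xpred0) (P T) k).
by rewrite /stmt_at (nth_map (Await 0 xpred0)).
Qed.

Lemma stmt_at_size k S : stmt_at P T k = Some S -> k < size (P T).
Proof. by rewrite /stmt_at; case: ltnP => // le_k; rewrite nth_default ?size_map. Qed.

Lemma cfg_executed t : executed t -> cfg t = Some (kk t, sigma t, true).
Proof. by rewrite /Defs.executed /Defs.kk /Defs.sigma; case: (cfg t) => [[[k s] []]|]. Qed.

Lemma executed_stmt t : executed t -> exists S, stmt_at P T (kk t) = Some S.
Proof.
move=> ex_t; apply: stmt_at_defined; move: ex_t.
by rewrite /Defs.executed /Defs.kk; case: (cfg t) => [[[k s] al] /and3P[]|].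
Qed.

Lemma cfg_succ t : executed t -> cfg t.+1 = Some (Defs.next P G T t (kk t, sigma t, true)).
Proof.
move=> ex_t; rewrite /= cfg_executed //.
by move: (ex_t); rewrite {1}/Defs.executed cfg_executed // => ->.
Qed.

Lemma executed_le t t' : t <= t' -> executed t' -> executed t.
Proof.
move=> /subnKC <-; elim: (t' - t) => [|d IH]; first by rewrite addn0.
rewrite addnS => ex_d; apply: IH; move: ex_d.
by rewrite /Defs.executed /=; case: (cfg (t + d)) => // c; case: ifP.
Qed.

Lemma kk_succ t : executed t ->
  kk t.+1 = if stmt_at P T (kk t) is Some (Await n kap)
            then (if kap (sigma t) then kk t - n else (kk t).+1) else (kk t).+1.
Proof.
move=> ex_t; have [S S_t] := executed_stmt ex_t.
rewrite {1}/Defs.kk cfg_succ // /Defs.next S_t.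
by case: S S_t => [eps d|n kap] //= _; [case: ifP | case: ifP].
Qed.

Lemma sigma_succ t : executed t -> sigma t.+1 = upd (sigma t) (delta_at t).
Proof.
move=> ex_t; have [S S_t] := executed_stmt ex_t.
rewrite {1}/Defs.sigma cfg_succ // /Defs.next /Defs.delta_at ex_t /Defs.vv /Defs.ev S_t.
by case: S S_t => [eps d|n kap] //= _; [case: ifP | case: ifP].
Qed.

Lemma delta_at_await t n kap :
  stmt_at P T (kk t) = Some (Await n kap) -> delta_at t = @empty_update Register Value.
Proof. by rewrite /Defs.delta_at => ->; case: ifP. Qed.

Lemma vis_succ u t r : vis u t r -> delta_at t r = None -> vis u t.+1 r.
Proof.
move=> [upd_u later] none_t; split=> // u' /andP[lt_u]; rewrite ltnS leq_eqVlt.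
by case/orP => [/eqP -> | lt_t] //; apply: later; rewrite lt_u.
Qed.

Lemma last_update t t' r : t <= t' -> (forall u, t <= u < t' -> executed u) ->
  sigma t r <> sigma t' r -> exists2 u, t <= u < t' & vis u t' r.
Proof.
elim: t' => [|t' IH] le_t ex neq; first by move: le_t neq; rewrite leqn0 => /eqP ->.
move: le_t; rewrite leq_eqVlt ltnS => /orP [/eqP eq_t | le_t]; first by rewrite eq_t in neq.
have ex_t' : executed t' by apply: ex; rewrite le_t leqnn.
case upd_t': (delta_at t' r) => [v|].
  by exists t'; [rewrite le_t ltnSn | split=> [|u']; [rewrite upd_t' | lia]].
move: neq; rewrite sigma_succ // /upd upd_t' => neq.
have [|u range vis_u] := IH le_t _ neq; first by move=> u /andP[? ?]; apply: ex; lia.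
by exists u; [lia | exact: vis_succ].
Qed.

Lemma vv_eq_of_rf a b : ev a = ev b ->
  (is_read (ev a) -> exists w, Grf G (T, a, ev a) = Some w /\ Grf G (T, b, ev b) = Some w) ->
  vv a = vv b.
Proof.
rewrite /Defs.vv /rf_val => eq_ev rf; rewrite -eq_ev.
by case: ifP => // /rf [w [-> ]]; rewrite eq_ev => ->.
Qed.

Local Notation nawaits t := (count await_step (iota 0 t)).

Lemma nawaits_le t t' : t <= t' -> nawaits t <= nawaits t'.
Proof. by move=> /subnKC <-; rewrite iotaD count_cat leq_addr. Qed.

Lemma nawaits_succ t : nawaits t.+1 = nawaits t + await_step t.
Proof. by rewrite -addn1 iotaD count_cat /= addn0. Qed.

Lemma is_end_lt q q' t t' : is_end q t -> is_end q' t' -> q < q' -> t < t'.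
Proof.
move=> [_ <-] [_ <-] lt_n; rewrite ltnNge; apply: contraTN lt_n.
by rewrite -leqNgt; apply: nawaits_le.
Qed.

Lemma is_end_uniq q t t' : is_end q t -> is_end q t' -> t = t'.
Proof.
wlog lt_t : t t' / t < t'.
  move=> wlog end_t end_t'.
  by case: (ltngtP t t') => [lt|lt|//]; [apply: wlog | symmetry; apply: wlog].
move=> [aw_t cnt_t] [_ cnt_t']; have := nawaits_le lt_t.
by rewrite nawaits_succ aw_t cnt_t cnt_t' addn1 ltnn.
Qed.

Lemma end_eq q t : is_end q t -> end_ q = t.
Proof.
move=> end_t; rewrite /Defs.end_.
case: excluded_middle_informative => [has | []]; last by exists t.
by case: constructive_indefinite_description => t' end_t' /=; apply: is_end_uniq end_t.
Qed.

Lemma is_end_succ q t t' : is_end q t -> await_step t' -> t < t' ->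
  (forall u, t < u < t' -> ~~ await_step u) -> is_end q.+1 t'.
Proof.
move=> [aw_t cnt_t] aw_t' lt_t none; split=> //.
rewrite -(subnKC lt_t) iotaD count_cat nawaits_succ aw_t cnt_t addn1.
rewrite (@eq_in_count _ _ pred0) ?count_pred0 ?addn0 // => u.
by rewrite mem_iota => range; apply/negbTE/none; lia.
Qed.

Hypothesis wfP : wf_program P.

Lemma step_in_await_window K n kap k : stmt_at P T K = Some (Await n kap) ->
  K - n <= k < K -> exists eps d, stmt_at P T k = Some (Step eps d).
Proof.
move=> aw_K range; have [_ free] := wfP aw_K.
have [S S_k] : exists S, stmt_at P T k = Some S.
  by apply: stmt_at_defined; apply: ltn_trans (stmt_at_size aw_K); case/andP: range.
by case: S S_k (free k range) => [eps d|n' kap'] S_k; [exists eps, d | move/(_ _ S_k)].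
Qed.

Lemma await_jump_outside_window K n kap K' n' kap' :
  stmt_at P T K = Some (Await n kap) -> stmt_at P T K' = Some (Await n' kap') ->
  K - n < K' - n' <= K -> False.
Proof.
move=> aw_K aw_K' range; have [_ free] := wfP aw_K; have [_ free'] := wfP aw_K'.
case: (ltngtP K' K) => [lt_K | lt_K' | eq_K].
- by have /negP := free K' ltac:(lia) _ aw_K'.
- by have /negP := free' K ltac:(lia) _ aw_K.
- by move: aw_K'; rewrite eq_K aw_K => -[eq_n _]; lia.
Qed.

Section FailedIteration.
Variables (q n : nat) (kap : State Register Value -> bool).
Hypothesis wi : WI rlx P init G T q.
Hypothesis await_end : stmt_at P T (kk (end_ q)) = Some (Await n kap).

Local Notation te := (end_ q).

Lemma is_end_end : is_end q te.
Proof.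
have [[[t end_t] _] _] := wi.
by rewrite (end_eq end_t).
Qed.

Lemma executed_end : executed te.
Proof. by have [/andP[]] := is_end_end. Qed.

Lemma await_taken : kap (sigma te).
Proof. by have [[_]] := wi; rewrite await_end. Qed.

Lemma len_le_kk_end : n <= kk te.
Proof. by have [] := wfP await_end. Qed.

Lemma len_end : len P init G T q = n.
Proof. by rewrite /len await_end. Qed.

Lemma kk_before_await j : j <= n -> j <= te /\ kk (te - j) = kk te - j.
Proof.
have le_n := len_le_kk_end.
elim: j => [|j IH] lt_j; first by rewrite !subn0.
have [le_j] := IH (ltnW lt_j).
case eq_t: (te - j) => [|t] kk_t; first by move: kk_t; rewrite [kk 0]/Defs.kk /=; lia.
have ex_t : executed t by apply: executed_le executed_end; lia.
have -> : te - j.+1 = t by lia.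
split; first lia.
move: kk_t; rewrite kk_succ //.
case aw_t: (stmt_at P T (kk t)) => [[eps d|n' kap']|]; try lia.
case: ifP => _ kk_t; last lia.
by exfalso; apply: (await_jump_outside_window await_end aw_t); lia.
Qed.

Lemma start_end : start P init G T q = te - n.
Proof. by rewrite /start len_end. Qed.

Lemma kk_window j : j <= n -> kk (te - n + j) = kk te - n + j.
Proof.
move=> le_j; have [le_n _] := kk_before_await (leqnn n).
have [_ kk_j] := kk_before_await (leq_subr j n).
have -> : te - n + j = te - (n - j) by lia.
by rewrite kk_j; have := len_le_kk_end; lia.
Qed.

Lemma executed_window j : j <= n -> executed (te - n + j).
Proof.
move=> le_j; have [le_n _] := kk_before_await (leqnn n).
by apply: executed_le executed_end; lia.
Qed.

Lemma kk_after_jump j : j <= n -> executed (te + j) -> kk (te + j).+1 = kk te - n + j.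
Proof.
elim: j => [|j IH] le_j ex_j.
  by rewrite addn0 kk_succ ?executed_end // await_end await_taken addn0.
have ex_j' : executed (te + j) by apply: executed_le ex_j; lia.
have le_n := len_le_kk_end.
have kk_j := IH (ltnW le_j) ex_j'.
have [eps [d step_j]] := @step_in_await_window _ _ _ (kk te - n + j) await_end ltac:(lia).
have S_j : stmt_at P T (kk (te + j).+1) = Some (Step eps d) by rewrite kk_j.
have ex_Sj : executed (te + j).+1 by rewrite -addnS.
by rewrite addnS kk_succ // S_j kk_j addnS.
Qed.

Lemma no_await_after_jump j : j < n -> ~~ await_step (te + j).+1.
Proof.
move=> lt_j; rewrite /Defs.await_step; case ex: (executed _) => //=.
rewrite kk_after_jump ?(ltnW lt_j) //; last by apply: executed_le ex.
have le_n := len_le_kk_end.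
by have [eps [d ->]] := @step_in_await_window _ _ _ (kk te - n + j) await_end ltac:(lia).
Qed.

Lemma executed_replay j : j <= n -> executed (te.+1 + j).
Proof.
have [_ [[t1 end_t1] _]] := wi.
have lt_t1 := is_end_lt is_end_end end_t1 (ltnSn q).
suff le_t1 : te.+1 + n <= t1.
  by move=> le_j; have [/andP[ex_t1 _] _] := end_t1; apply: executed_le ex_t1; lia.
rewrite leqNgt; apply/negP => lt_n.
have [aw_t1 _] := end_t1.
have := no_await_after_jump (j := t1 - te.+1) ltac:(lia).
have -> : (te + (t1 - te.+1)).+1 = t1 by lia.
by rewrite aw_t1.
Qed.

Lemma kk_replay j : j <= n -> kk (te.+1 + j) = kk te - n + j.
Proof.
move=> le_j; rewrite addSn kk_after_jump //.
by apply: executed_le (executed_replay le_j); lia.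
Qed.

Lemma end_succ : end_ q.+1 = te.+1 + n.
Proof.
apply: end_eq; apply: is_end_succ is_end_end _ _ _; last 2 first.
- lia.
- move=> u range; have := no_await_after_jump (j := u.-1 - te) ltac:(lia).
  by have -> : (te + (u.-1 - te)).+1 = u by lia.
by rewrite /Defs.await_step executed_replay // kk_replay // subnK ?await_end ?len_le_kk_end.
Qed.

Lemma start_succ : start P init G T q.+1 = te.+1.
Proof.
by rewrite /start /len end_succ kk_replay // subnK ?len_le_kk_end // await_end; lia.
Qed.

Hypothesis be : BE rlx P init G.

Definition differences_visible j := forall r,
  sigma (te - n + j) r <> sigma (te.+1 + j) r ->
  exists2 u, u \in index_iota (te - n) te & vis u (te.+1 + j) r.

Lemma independent_of_window j S u : j <= n ->
  stmt_at P T (kk (te.+1 + j)) = Some S -> u \in index_iota (te - n) te ->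
  ~ stmt_depends S (vis u (te.+1 + j)).
Proof.
move=> le_j S_j; rewrite mem_index_iota -start_end => u_win dep.
have [_ /(_ (te.+1 + j))] := be wi.1 u_win.
have /[swap] /[apply] : rrf rlx P init G T u (te.+1 + j).
  by split; [lia | rewrite executed_replay // S_j].
lia.
Qed.

Lemma stmt_replay j : j <= n ->
  stmt_at P T (kk (te - n + j)) = stmt_at P T (kk (te.+1 + j)).
Proof. by move=> le_j; rewrite kk_window ?kk_replay. Qed.

Lemma ev_replay j : j <= n -> differences_visible j -> ev (te - n + j) = ev (te.+1 + j).
Proof.
move=> le_j cover; rewrite /Defs.ev stmt_replay //.
have [S S_j] := executed_stmt (executed_replay le_j).
rewrite S_j; case: S S_j => [eps d|m kap'] S_j //=.
apply: (independent_agree (V := fun u => vis u (te.+1 + j))) cover => u u_win dep.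
by apply: (independent_of_window le_j S_j u_win); left.
Qed.

Lemma update_replay j eps d v : j <= n -> differences_visible j ->
  stmt_at P T (kk (te.+1 + j)) = Some (Step eps d) ->
  d (sigma (te - n + j)) v = d (sigma (te.+1 + j)) v.
Proof.
move=> le_j cover S_j.
apply: (independent_agree (f := fun s => d s v) (V := fun u => vis u (te.+1 + j))) cover.
move=> u u_win [s [s' [agree neq]]].
by apply: (independent_of_window le_j S_j u_win); right; exists s, s', v.
Qed.

Lemma vv_replay j : j <= n -> differences_visible j -> vv (te - n + j) = vv (te.+1 + j).
Proof.
move=> le_j cover; apply: vv_eq_of_rf (ev_replay le_j cover) _.
by have [_ [_]] := wi; rewrite start_end start_succ len_end; apply.
Qed.

Lemma delta_replay j : j < n -> differences_visible j ->
  delta_at (te - n + j) = delta_at (te.+1 + j).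
Proof.
move=> lt_j cover; have le_j := ltnW lt_j.
rewrite /Defs.delta_at executed_window // executed_replay // stmt_replay //.
case S_j: (stmt_at P T (kk (te.+1 + j))) => [[eps d|m kap']|] //.
by rewrite ev_replay // vv_replay // (update_replay _ le_j cover S_j).
Qed.

Lemma differences_visible_replay j : j <= n -> differences_visible j.
Proof.
elim: j => [|j IH] lt_j r.
  rewrite !addn0 sigma_succ ?executed_end // (delta_at_await await_end) => neq.
  have [|u range vis_u] := @last_update (te - n) te r (leq_subr n te) _ neq.
    by move=> u range; apply: executed_le executed_end; lia.
  exists u; first by rewrite mem_index_iota.
  by apply: vis_succ; rewrite // (delta_at_await await_end).
rewrite !addnS (sigma_succ (executed_window (ltnW lt_j))).
rewrite (sigma_succ (executed_replay (ltnW lt_j))).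
rewrite (delta_replay lt_j (IH (ltnW lt_j))) /upd.
case upd_j: (delta_at (te.+1 + j) r) => [v|] // neq.
have [u u_win vis_u] := IH (ltnW lt_j) r neq.
by exists u; last exact: vis_succ.
Qed.

End FailedIteration.

End ThreadRun.

Theorem lemma5 (Register Value Location : finType) (Mode : Type) (rlx : Mode)
  (Thread : finType) (P : Program Register Value Location Mode Thread)
  (init : Thread -> State Register Value)
  (G : Graph Value Location Mode Thread)
  (T : Thread) (q m : nat) :
  wf_program P -> graph_wf G ->
  BE rlx P init G ->
  WI rlx P init G T q ->
  m <= len P init G T q ->
  let a := start P init G T q + m in
  let b := start P init G T q.+1 + m in
  [/\ ev rlx P init G T a = ev rlx P init G T b,
      vv rlx P init G T a = vv rlx P init G T b,
      kk P init G T a = kk P init G T b &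
      forall r, sigma P init G T a r <> sigma P init G T b r ->
        exists u, start P init G T q <= u <= end_ P init G T q /\
                  vis rlx P init G T u b r].
Proof.
move=> wfP _ be wi le_m a b.
have [[_ taken] _] := wi; move: taken.
case await_end: (stmt_at P T (kk P init G T (end_ P init G T q))) => [S|] //.
case: S await_end => [eps d|n kap] await_end // _.
rewrite (len_end await_end) in le_m.
have cover := differences_visible_replay wfP wi await_end be le_m.
rewrite /a /b (start_end await_end) (start_succ wfP wi await_end); split.
- exact: (ev_replay wfP wi await_end be le_m cover).
- exact: (vv_replay wfP wi await_end be le_m cover).
- by rewrite (kk_window wfP wi await_end le_m) (kk_replay wfP wi await_end le_m).
- move=> r /cover [u]; rewrite mem_index_iota => range vis_u.
  by exists u; split=> //; lia.
Qed.
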